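(* Let $m,b\ge1$ and let $\varepsilon:(\mathbb{F}_2)^{mb}\to(\mathbb{F}_2)^{2^m b}$ be defined by $\varepsilon(v_1,\dots,v_b)=(\varepsilon'(v_1),\dots,\varepsilon'(v_b))$ for $v_j\in(\mathbb{F}_2)^m$. Then $\dim_{\mathbb{F}_2}\langle\varepsilon((\mathbb{F}_2)^{mb})\rangle=2^m b-(b-1)$.
   Context: Identify $(\mathbb{F}_2)^m$ with $\mathbb{F}_{2^m}=\mathbb{F}_2[x]/(p)$ for a primitive polynomial $p$ of degree $m$, and let $\gamma$ be a primitive element of $\mathbb{F}_{2^m}$ (a root of $p$). Let $e_1,\dots,e_{2^m}$ be the standard basis of $(\mathbb{F}_2)^{2^m}$, and define $\varepsilon':\mathbb{F}_{2^m}\to(\mathbb{F}_2)^{2^m}$ by $\varepsilon'(0)=e_1$ and $\varepsilon'(\gamma^i)=e_{i+1}$ for $1\le i\le 2^m-1$. $\langle S\rangle$ denotes the $\mathbb{F}_2$-linear span of $S$. *)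

From HB Require Import structures.
From mathcomp Require Import all_boot all_algebra.
From mathcomp Require Import qpoly qfpoly.
Set Implicit Arguments. Unset Strict Implicit. Unset Printing Implicit Defensive.
Import GRing.Theory.
Local Open Scope ring_scope.

(* The field F_{2^m} is modelled as {poly %/ p} = F_2[x]/(p) for a primitive
   polynomial p of degree m (hypotheses of the theorem); gamma = 'qX, the class
   of x, which is a root of p. *)

Definition vec_to_field (p : {poly 'F_2}) (m : nat) (v : 'rV['F_2]_m) : {poly %/ p} :=
  in_qpoly p (rVpoly v).
Arguments vec_to_field p m v : clear implicits.

(* eps' : F_{2^m} -> (F_2)^(2^m).  Coordinates are 0-based: coordinate k
   corresponds to e_(k+1).  eps'(0) = e_1 (coordinate 0), and
   eps'(gamma^i) = e_(i+1) (coordinate i) for 1 <= i <= 2^m - 1. *)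
Definition eps' (p : {poly 'F_2}) (m : nat) (x : {poly %/ p}) : 'rV['F_2]_(2 ^ m) :=
  \row_(k < 2 ^ m)
    (if x == 0 then (k == 0%N :> nat)
     else (0 < k)%N && ('qX ^+ k == x))%:R.
Arguments eps' p m x : clear implicits.

(* eps : (F_2)^(m b) -> (F_2)^(2^m b); the input is split into b consecutive
   blocks v_1, ..., v_b of length m (row-major reshaping via vec_mx), and the
   output is the concatenation (eps'(v_1), ..., eps'(v_b)) (via mxvec). *)
Definition eps (p : {poly 'F_2}) (m b : nat) (v : 'rV['F_2]_(b * m)) :
    'rV['F_2]_(b * 2 ^ m) :=
  mxvec (\matrix_(j < b, k < 2 ^ m)
           eps' p m (vec_to_field p m (row j (vec_mx v))) 0 k).
Arguments eps p m b v : clear implicits.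

(* By primitivity of gamma, the nonzero elements of F_{2^m} are exactly
   gamma^1, ..., gamma^(2^m-1), so eps' is a bijection onto the standard basis
   and the image of eps is the set of vectors with exactly one 1 in each of the
   b blocks.  Their span S contains the kernel of the block-sum map
   (F_2)^(2^m b) -> (F_2)^b, since e_(j,k) - e_(j,0) is a difference of two
   such vectors; this map is onto, so its kernel has dimension 2^m b - b, and
   it sends S onto the line spanned by (1, ..., 1).  Hence
   dim S = 2^m b - b + 1. *)

From mathcomp Require Import all_boot all_algebra.
From mathcomp Require Import qpoly qfpoly zify.
Set Implicit Arguments. Unset Strict Implicit. Unset Printing Implicit Defensive.
Import GRing.Theory.
Local Open Scope ring_scope.

Section OnehotRows.
Variables (F : fieldType) (b n : nat).

Definition onehot_mx (c : 'I_b -> 'I_n) : 'M[F]_(b, n) :=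
  \matrix_(j, k) (k == c j)%:R.

Definition onehot_span : {vspace 'rV[F]_(b * n)} :=
  <<[seq mxvec (onehot_mx c) | c : {ffun 'I_b -> 'I_n}]>>.

Definition row_sums : 'Hom('rV[F]_(b * n), 'cV[F]_b) :=
  linfun (mulmxr (const_mx 1) \o vec_mx).

Lemma row_sumsE w : row_sums w = vec_mx w *m const_mx 1.
Proof. by rewrite lfunE. Qed.

Lemma row_sums_onehot c : row_sums (mxvec (onehot_mx c)) = const_mx 1.
Proof.
apply/colP=> j; rewrite row_sumsE mxvecK !mxE (bigD1 (c j)) //=.
rewrite big1 => [|k /negPf ck].
  by rewrite !mxE eqxx mulr1 addr0.
by rewrite !mxE ck mul0r.
Qed.

Lemma mxvec_onehot_in_span c : mxvec (onehot_mx c) \in onehot_span.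
Proof.
have -> : onehot_mx c = onehot_mx [ffun j => c j].
  by apply/matrixP=> j k; rewrite !mxE ffunE.
by apply: memv_span; apply: image_f.
Qed.

Lemma limg_row_sums : (0 < n)%N -> (row_sums @: fullv)%VS = fullv.
Proof.
move=> n_gt0; apply/eqP; rewrite eqEsubv subvf; apply/subvP=> y _.
have -> : y = row_sums (mxvec (y *m delta_mx 0 (Ordinal n_gt0))).
  rewrite row_sumsE mxvecK -mulmxA; apply/colP=> j.
  rewrite !mxE big_ord1 !mxE (bigD1 (Ordinal n_gt0)) //= big1 => [|k /negPf k0].
    by rewrite !mxE eqxx mulr1 addr0 mulr1.
  by rewrite !mxE k0 mul0r.
exact: memv_img (memvf _).
Qed.

Lemma row_sums0_sum_delta (M : 'M[F]_(b, n)) k0 :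
  M *m (const_mx 1 : 'cV_n) = 0 ->
  M = \sum_j \sum_k M j k *: (delta_mx j k - delta_mx j k0).
Proof.
move=> M1; rewrite [LHS]matrix_sum_delta; apply: eq_bigr => j _.
under [RHS]eq_bigr do rewrite scalerBr.
rewrite sumrB -scaler_suml.
have /colP/(_ j) := M1; rewrite !mxE.
under eq_bigr do rewrite mxE mulr1.
by move=> ->; rewrite scale0r subr0.
Qed.

Lemma delta_mx_sub_onehot j k k0 :
  delta_mx j k - delta_mx j k0 =
    onehot_mx (fun i => if i == j then k else k0) - onehot_mx (fun _ => k0)
  :> 'M[F]_(b, n).
Proof.
apply/matrixP=> i l; rewrite !mxE eq_sym.
by case: (j == i); rewrite ?subrr.
Qed.

Lemma lker_row_sums_sub_span : (0 < n)%N -> (lker row_sums <= onehot_span)%VS.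
Proof.
move=> n_gt0; set k0 := Ordinal n_gt0.
apply/subvP=> w; rewrite memv_ker row_sumsE.
move=> /eqP/(row_sums0_sum_delta k0) w_sum.
rewrite -[w]vec_mxK w_sum linear_sum /=; apply: memv_suml => j _.
rewrite linear_sum /=; apply: memv_suml => k _.
rewrite linearZ delta_mx_sub_onehot linearB /=.
by apply/memvZ/memvB; apply: mxvec_onehot_in_span.
Qed.

Lemma dim_onehot_span :
  (0 < b)%N -> (0 < n)%N -> \dim onehot_span = (b * n - b).+1.
Proof.
move=> b_gt0 n_gt0.
have dim_ker : \dim (lker row_sums) = (b * n - b)%N.
  have := limg_ker_dim row_sums fullv; rewrite capfv limg_row_sums // !dimvf /=.
  rewrite !dim_matrix mulr1 mul1r => dimE.
  by rewrite -[in RHS]dimE addnK.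
have img_span : (row_sums @: onehot_span)%VS = <[const_mx 1%R : 'cV[F]_b]>%VS.
  rewrite limg_span -span_seq1; apply: eq_span => y.
  apply/mapP/idP => [[_ /imageP[c _ ->] ->]|].
    by rewrite row_sums_onehot inE.
  rewrite inE => /eqP ->; exists (mxvec (onehot_mx [ffun=> Ordinal n_gt0])).
    exact: image_f.
  by rewrite row_sums_onehot.
have := limg_ker_dim row_sums onehot_span.
rewrite (capv_idPr (lker_row_sums_sub_span n_gt0)) img_span dim_vline dim_ker.
have -> : (const_mx 1 != 0 :> 'cV[F]_b).
  by apply/eqP=> /colP/(_ (Ordinal b_gt0))/eqP; rewrite !mxE oner_eq0.
by move=> <-; rewrite addn1.
Qed.

End OnehotRows.

Arguments onehot_mx {F b n} c.

Section PrimitiveQpoly.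
Variables (m : nat) (p : {poly 'F_2}).
Hypotheses (m_gt0 : (0 < m)%N) (size_p : size p = m.+1).
Hypothesis prim_p : primitive_poly p.

Local Notation T := {poly %/ p}.

Lemma card_qpoly_F2 : #|T| = (2 ^ m)%N.
Proof.
case/primitive_polyP: prim_p => -[_ p_monic] _ _.
by rewrite card_monic_qpoly ?size_p // card_Fp.
Qed.

Lemma qX_exp_eq1 k : ('qX ^+ k == 1 :> T) = (p %| 'X^k - 1).
Proof.
rewrite -(primitive_poly_in_qpoly_eq0 prim_p).
by rewrite rmorphB rmorphXn rmorph1 subr_eq0.
Qed.

Lemma qX_order : 'qX ^+ (2 ^ m).-1 = 1 :> T.
Proof.
by case/primitive_polyP: prim_p; rewrite card_qpoly_F2 -qX_exp_eq1 => _ /eqP.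
Qed.

Lemma qX_exp_neq1 k : (0 < k < (2 ^ m).-1)%N -> 'qX ^+ k != 1 :> T.
Proof.
by case/primitive_polyP: prim_p; rewrite card_qpoly_F2 qX_exp_eq1 => _ _; apply.
Qed.

Lemma pred_exp2_gt0 : (0 < (2 ^ m).-1)%N.
Proof. by rewrite -ltnS prednK ?expn_gt0 // -{1}(expn0 2) ltn_exp2l. Qed.

Lemma qX_exp_neq0 k : 'qX ^+ k != 0 :> T.
Proof.
apply/eqP=> qXk0; have := congr1 (fun x : T => x ^+ (2 ^ m).-1) qXk0.
rewrite -exprM mulnC exprM qX_order expr1n expr0n eqn0Ngt pred_exp2_gt0 /=.
by apply/eqP; rewrite oner_eq0.
Qed.

Lemma qX_exp_inj i j : (0 < i <= (2 ^ m).-1)%N -> (0 < j <= (2 ^ m).-1)%N ->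
  'qX ^+ i = 'qX ^+ j :> T -> i = j.
Proof.
wlog lt_ij : i j / (i < j)%N => [wlog_ij | i_range j_range qXij].
  move=> i_range j_range qXij; case: (ltngtP i j) => // [lt_ij | lt_ji].
    exact: wlog_ij.
  by apply/esym/wlog_ij.
suff /qX_exp_neq1/negP[] : (0 < (2 ^ m).-1 - j + i < (2 ^ m).-1)%N.
  by rewrite exprD qXij -exprD subnK ?qX_order //; case/andP: j_range.
lia.
Qed.

Definition elt_of_coord (k : 'I_(2 ^ m)) : T :=
  if k == 0%N :> nat then 0 else 'qX ^+ k.

Lemma elt_of_coord_inj : injective elt_of_coord.
Proof.
have coord_le (k : 'I_(2 ^ m)) : (k <= (2 ^ m).-1)%N.
  by rewrite -ltnS prednK ?expn_gt0.
move=> k l; rewrite /elt_of_coord.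
case: (posnP k) => [k0 | k_gt0]; case: (posnP l) => [l0 | l_gt0] //=.
- by move=> _; apply/val_inj; rewrite /= k0 l0.
- by move/esym/eqP; rewrite (negPf (qX_exp_neq0 _)).
- by move/eqP; rewrite (negPf (qX_exp_neq0 _)).
by move/qX_exp_inj => kl; apply/val_inj/kl; rewrite ?k_gt0 ?l_gt0 coord_le.
Qed.

Lemma elt_of_coord_bij : bijective elt_of_coord.
Proof.
by apply: inj_card_bij elt_of_coord_inj _; rewrite card_qpoly_F2 card_ord.
Qed.

Lemma eps'E x k : eps' p m x 0 k = (elt_of_coord k == x)%:R.
Proof.
rewrite mxE /elt_of_coord eqn0Ngt.
have [k0 | k_gt0] := posnP k; rewrite ?k0 ?k_gt0 /=.
  by rewrite eq_sym; case: ifP.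
by case: eqP => // ->; rewrite (negPf (qX_exp_neq0 _)).
Qed.

Lemma eps'_elt_of_coord k : eps' p m (elt_of_coord k) = delta_mx 0 k.
Proof. by apply/rowP=> l; rewrite eps'E (inj_eq elt_of_coord_inj) !mxE. Qed.

Lemma vec_to_fieldK (x : T) : vec_to_field p m (poly_rV x) = x.
Proof.
case/primitive_polyP: prim_p => -[_ p_monic] _ _.
have mk_p : mk_monic p = p by rewrite /mk_monic size_p ltnS m_gt0 p_monic.
have size_x : (size (x : {poly 'F_2}) <= m)%N.
  by apply: leq_trans (size_npoly x) _; rewrite mk_p size_p.
apply/val_inj; rewrite /vec_to_field poly_rV_K //= Pdiv.Ring.rmodp_small //.
exact: size_mk_monic.
Qed.

Lemma eps_onehot b (w : 'rV_(b * m)) (c : 'I_b -> 'I_(2 ^ m)) :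
    (forall j, vec_to_field p m (row j (vec_mx w)) = elt_of_coord (c j)) ->
  eps p m b w = mxvec (onehot_mx c).
Proof.
move=> wc; congr mxvec; apply/matrixP=> j k.
by rewrite [LHS]mxE wc eps'_elt_of_coord !mxE.
Qed.

Lemma eps_image b :
  [seq eps p m b w | w <- enum [set: 'rV_(b * m)]] =i
  [seq mxvec (onehot_mx c) | c : {ffun 'I_b -> 'I_(2 ^ m)}].
Proof.
have [coord eltK coordK] := elt_of_coord_bij.
move=> y; apply/mapP/imageP => [[w _ ->] | [c _ ->]].
  exists [ffun j => coord (vec_to_field p m (row j (vec_mx w)))] => //.
  by apply: eps_onehot => j; rewrite ffunE coordK.
exists (mxvec (\matrix_j poly_rV (elt_of_coord (c j)))).
  by rewrite mem_enum inE.
by apply/esym/eps_onehot => j; rewrite mxvecK rowK vec_to_fieldK.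
Qed.

End PrimitiveQpoly.

Theorem mainTheorem5 (m b : nat) (p : {poly 'F_2}) :
  (1 <= m)%N -> (1 <= b)%N ->
  size p = m.+1 -> primitive_poly p ->
  \dim <<[seq eps p m b v | v <- enum [set: 'rV['F_2]_(b * m)]]>>%VS
    = (2 ^ m * b - (b - 1))%N.
Proof.
move=> m_gt0 b_gt0 size_p prim_p.
rewrite (eq_span (eps_image m_gt0 size_p prim_p (b:=b))).
rewrite dim_onehot_span ?expn_gt0 //.
have : (b <= b * 2 ^ m)%N by rewrite leq_pmulr ?expn_gt0.
lia.
Qed.
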